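(* Let $n,k$ be integers with $2\leq k\leq n-2$. The sparse paving positroids on ground set $[n]$ of rank $k$ are in bijection with the non-adjacent subsets of $[n]$, via the map sending the positroid with Grassmann necklace $(I_1,\dots,I_n)$ to $\{i\in[n]: I_i\neq C_{k,n}^{(i)}\}$.
   Context: A subset $A\subseteq[n]$ is non-adjacent if whenever $i\in A$ we have $i-1\notin A$ and $i+1\notin A$, considered modulo $n$ (so $1$ and $n$ are adjacent). For $t\in[n]$, the order $<_t$ on $[n]$ is $t <_t t+1 <_t \cdots <_t n <_t 1 <_t \cdots <_t t-1$. For $k$-subsets $I=\{a_1<_t\cdots<_t a_k\}$, $J=\{b_1<_t\cdots<_t b_k\}$ write $I\leq_t J$ if $a_i\leq_t b_i$ for all $i$. A positroid of rank $k$ on $[n]$ is a matroid whose bases are $\bigcap_{t=1}^n\{J\in\binom{[n]}{k}: I_t\leq_t J\}$ for some Grassmann necklace $(I_1,\dots,I_n)$, i.e. a sequence of $k$-subsets of $[n]$ with (indices mod $n$) $I_{i+1}=(I_i\setminus\{i\})\cup\{j\}$ for some $j$ if $i\in I_i$, and $I_{i+1}=I_i$ if $i\notin I_i$; then $I_t$ is the $\leq_t$-minimal basis. $C_{k,n}^{(i)}=\{i,i+1,\dots,i+k-1\}$ modulo $n$ with representatives in $[n]$. A rank-$k$ matroid is paving if every circuit has size at least $k$, and sparse paving if it and its dual are paving. *)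

(* Ground set [n] is modelled by 'I_n : element i : 'I_n
   stands for i+1 in [n]. *)
From mathcomp Require Import all_boot.
Set Implicit Arguments.
Unset Strict Implicit.
Unset Printing Implicit Defensive.

Section Positroids.
Variable n : nat.

Definition nsucc (i : 'I_n) : 'I_n := ordS i.
Definition npred (i : 'I_n) : 'I_n := ord_pred i.

(* position of x in the order <_t : t <_t t+1 <_t ... <_t t-1 *)
Definition trank (t x : 'I_n) : nat := (x + n - t) %% n.

Definition le_t (t x y : 'I_n) : bool := trank t x <= trank t y.

(* I <=_t J (Gale order): writing I = {a_1 <_t ... <_t a_k} and
   J = {b_1 <_t ... <_t b_k}, a_i <=_t b_i for all i.  Elements are listed
   in <_t-increasing order via their <_t-positions (trank t is injective). *)
Definition gale_le (t : 'I_n) (I J : {set 'I_n}) : bool :=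
  (#|I| == #|J|) &&
  all2 leq (sort leq [seq trank t x | x <- enum I])
           (sort leq [seq trank t x | x <- enum J]).

Definition non_adjacent (A : {set 'I_n}) : bool :=
  [forall i, (i \in A) ==> (npred i \notin A) && (nsucc i \notin A)].

(* C_{k,n}^{(i)} = {i, i+1, ..., i+k-1} mod n *)
Definition cyc_interval (k : nat) (i : 'I_n) : {set 'I_n} :=
  [set x | trank i x < k].

Definition grassmann_necklace (k : nat) (I : 'I_n -> {set 'I_n}) : Prop :=
  (forall i, #|I i| = k) /\
  (forall i, if i \in I i then exists j, I (nsucc i) = (I i :\ i) :|: [set j]
             else I (nsucc i) = I i).

Definition necklace_bases (k : nat) (I : 'I_n -> {set 'I_n})
  : {set {set 'I_n}} :=
  [set J : {set 'I_n} | (#|J| == k) && [forall t, gale_le t (I t) J]].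

Definition is_matroid (B : {set {set 'I_n}}) : Prop :=
  B != set0 /\
  forall B1 B2, B1 \in B -> B2 \in B -> forall x, x \in B1 :\: B2 ->
    exists2 y, y \in B2 :\: B1 & (B1 :\ x) :|: [set y] \in B.

Definition has_rank (k : nat) (B : {set {set 'I_n}}) : Prop :=
  forall J, J \in B -> #|J| = k.

Definition positroid (k : nat) (B : {set {set 'I_n}}) : Prop :=
  is_matroid B /\ has_rank k B /\
  exists I, grassmann_necklace k I /\ B = necklace_bases k I.

Definition independent (B : {set {set 'I_n}}) (X : {set 'I_n}) : bool :=
  [exists J in B, X \subset J].

Definition circuit (B : {set {set 'I_n}}) (C : {set 'I_n}) : bool :=
  ~~ independent B C && [forall x in C, independent B (C :\ x)].

Definition paving (k : nat) (B : {set {set 'I_n}}) : Prop :=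
  forall C, circuit B C -> k <= #|C|.

Definition dual_bases (B : {set {set 'I_n}}) : {set {set 'I_n}} :=
  [set ~: J | J in B].

Definition sparse_paving (k : nat) (B : {set {set 'I_n}}) : Prop :=
  paving k B /\ paving (n - k) (dual_bases B).

Definition necklace_of (B : {set {set 'I_n}}) (t : 'I_n) : {set 'I_n} :=
  odflt set0 [pick J in B | [forall J' in B, gale_le t J J']].

Definition spp_map (k : nat) (B : {set {set 'I_n}}) : {set 'I_n} :=
  [set i | necklace_of B i != cyc_interval k i].

Definition sparse_paving_positroid (k : nat) (B : {set {set 'I_n}}) : Prop :=
  positroid k B /\ sparse_paving k B.

End Positroids.

From mathcomp Require Import all_boot zify.
Set Implicit Arguments.
Unset Strict Implicit.
Unset Printing Implicit Defensive.

(* Write C_t = {t, ..., t+k-1} and D_t = {t, ..., t+k-2, t+k}.  For the Gale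
   order <=_t, C_t is the least k-set and D_t the least one other than C_t, so
   the necklace of a positroid B has I_t = C_t exactly when C_t is a basis, and
   the map sends B to the set of t such that C_t is not a basis.  Two nonbases
   of a sparse paving matroid never share k-1 elements, while C_t and C_(t+1)
   do: the image is non-adjacent.  Then at t in the image both neighbouring
   intervals are bases, which forces I_t = D_t, and every k-set other than C_t
   is >=_t D_t; hence the bases of B are exactly the k-sets other than the C_t
   missing from B, which gives injectivity.  Conversely, for A non-adjacent the
   intervals C_t (t in A) pairwise share at most k-2 elements, so the k-sets
   avoiding them form a sparse paving matroid, namely the positroid with
   necklace I_t = D_t for t in A and I_t = C_t otherwise. *)

Section CyclicRank.
Variable n : nat.
Implicit Types t s x y : 'I_n.

Lemma trankE t x : trank t x = if t <= x then x - t else x + n - t.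
Proof.
have hx := ltn_ord x; have ht := ltn_ord t.
rewrite /trank; case: leqP => h.
  by rewrite (_ : x + n - t = (x - t) + n) ?modnDr ?modn_small //; lia.
by rewrite modn_small //; lia.
Qed.

Lemma trank_lt t x : trank t x < n.
Proof. by rewrite trankE; have := ltn_ord x; case: ifP; lia. Qed.

Lemma trank_inj t : injective (trank t).
Proof.
move=> x y; have := ltn_ord x; have := ltn_ord y; have := ltn_ord t.
by rewrite !trankE => ? ? ? h; apply: ord_inj; move: h; do 2 case: ifP; lia.
Qed.

Lemma trank_eq t x y : (trank t x == trank t y) = (x == y).
Proof. exact: (inj_eq (@trank_inj t)). Qed.

Lemma trank_eq0 t x : (trank t x == 0) = (x == t).
Proof.
have := ltn_ord x; have := ltn_ord t; rewrite trankE => ? ?.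
by apply/eqP/eqP => [h|->]; [apply: ord_inj; move: h; case: ifP | rewrite leqnn]; lia.
Qed.

Lemma trank_id t : trank t t = 0.
Proof. by apply/eqP; rewrite trank_eq0. Qed.

Lemma trank_surj t m : m < n -> {x | trank t x = m}.
Proof.
move=> hm; have ht := ltn_ord t.
have hv : (if t + m < n then t + m else t + m - n) < n by case: ifP; lia.
by exists (Ordinal hv); rewrite trankE /=; do 2 case: ifP; lia.
Qed.

Lemma nsuccE x : val (nsucc x) = if x.+1 < n then x.+1 else 0.
Proof.
have hx := ltn_ord x; rewrite /nsucc /ordS /=; case: ifP => h.
  by rewrite modn_small.
by rewrite (_ : x.+1 = n) ?modnn //; lia.
Qed.

Lemma trank_nsucc_base t x :
  trank (nsucc t) x = if trank t x == 0 then n.-1 else (trank t x).-1.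
Proof.
have := ltn_ord x; have := ltn_ord t.
by rewrite !trankE nsuccE; repeat case: ifP; lia.
Qed.

Lemma trank_nsucc t x :
  trank t (nsucc x) = if trank t x == n.-1 then 0 else (trank t x).+1.
Proof.
have := ltn_ord x; have := ltn_ord t.
by rewrite !trankE nsuccE; repeat case: ifP; lia.
Qed.

Lemma trank_rebase t s x : trank s x =
  if trank t s <= trank t x then trank t x - trank t s
  else trank t x + n - trank t s.
Proof.
have := ltn_ord x; have := ltn_ord t; have := ltn_ord s.
by rewrite !trankE; repeat case: ifP; lia.
Qed.

Lemma npredK : cancel (@npred n) (@nsucc n).
Proof. exact: ord_predK. Qed.

Lemma trank_npred_base t x :
  trank (npred t) x = if trank t x == n.-1 then 0 else (trank t x).+1.
Proof.
have := trank_nsucc_base (npred t) x; rewrite npredK => ->.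
by have := trank_lt (npred t) x; repeat case: ifP; lia.
Qed.

Lemma trank_nsucc_id t : 1 < n -> trank t (nsucc t) = 1.
Proof. by rewrite trank_nsucc trank_id; case: eqP; lia. Qed.

Lemma trank_npred_id t : trank t (npred t) = n.-1.
Proof.
have := trank_nsucc t (npred t); rewrite npredK trank_id.
by case: eqP => // _ /esym/eqP; rewrite -lt0n.
Qed.

Lemma card_trank_lt t m : m <= n -> #|[set x | trank t x < m]| = m.
Proof.
elim: m => [|m IH] hm.
  by apply/eqP; rewrite cards_eq0; apply/eqP/setP => x; rewrite !inE.
have [x0 hx0] := trank_surj t hm.
rewrite (_ : [set x | _ < m.+1] = x0 |: [set x | trank t x < m]).
  by rewrite cardsU1 IH ?inE ?hx0 ?ltnn //; lia.
by apply/setP => x; rewrite !inE -(trank_eq t) hx0; lia.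
Qed.

End CyclicRank.

Lemma all2_nthP (r : rel nat) (s t : seq nat) : size s = size t ->
  reflect (forall i, i < size s -> r (nth 0 s i) (nth 0 t i)) (all2 r s t).
Proof.
elim: s t => [|x s IH] [|y t] //=; first by constructor.
move=> [/IH {}IH]; apply: (iffP andP) => [[hxy /IH H] [|i] // hi | H].
  exact: H.
by split; [exact: (H 0) | apply/IH => i hi; apply: (H i.+1)].
Qed.

Section GaleOrder.
Variable n : nat.
Implicit Types t x : 'I_n.
Implicit Types X I J : {set 'I_n}.

Definition tranks t X := sort leq [seq trank t x | x <- enum X].

Lemma size_tranks t X : size (tranks t X) = #|X|.
Proof. by rewrite size_sort size_map cardE. Qed.

Lemma tranks_sorted t X : sorted ltn (tranks t X).
Proof.
rewrite ltn_sorted_uniq_leq sort_uniq sort_sorted ?andbT; last exact: leq_total.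
by rewrite map_inj_uniq ?enum_uniq //; apply: trank_inj.
Qed.

Lemma mem_tranks t X m : (m \in tranks t X) = [exists x in X, trank t x == m].
Proof.
rewrite mem_sort; apply/mapP/existsP => [[x] | [x /andP[hx /eqP <-]]].
  by rewrite mem_enum => hx ->; exists x; rewrite hx eqxx.
by exists x; rewrite ?mem_enum.
Qed.

Lemma tranks_eq t X s : sorted ltn s -> (forall m, m \in s -> m < n) ->
  (forall x, (x \in X) = (trank t x \in s)) -> tranks t X = s.
Proof.
move=> s_sorted s_lt X_s.
apply: (irr_sorted_eq ltn_trans ltnn (tranks_sorted t X) s_sorted) => m.
rewrite mem_tranks; apply/existsP/idP => [[x /andP[+ /eqP <-]] | ms].
  by rewrite X_s.
have [x xm] := trank_surj t (s_lt m ms).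
by exists x; rewrite X_s xm ms eqxx.
Qed.

Lemma nth_tranks_ge t X i : i < #|X| -> i <= nth 0 (tranks t X) i.
Proof.
elim: i => [|i IH] hi //.
have := sorted_ltn_nth ltn_trans 0 (tranks_sorted t X).
rewrite size_tranks => /(_ i i.+1); rewrite !inE => /(_ (ltnW hi) hi (ltnSn i)).
by have := IH (ltnW hi); lia.
Qed.

Lemma gale_leE t I J : #|I| = #|J| ->
  gale_le t I J = [forall i : 'I_#|I|, nth 0 (tranks t I) i <= nth 0 (tranks t J) i].
Proof.
move=> hIJ; rewrite /gale_le {1}hIJ eqxx /=.
have hs : size (tranks t I) = size (tranks t J) by rewrite !size_tranks.
apply/(all2_nthP _ hs)/forallP => [h i | h i]; first by apply: h; rewrite size_tranks.
by rewrite size_tranks => hi; exact: (h (Ordinal hi)).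
Qed.

Variable k : nat.
Local Notation C t := (cyc_interval k t).

Definition cyc_interval_next t : {set 'I_n} :=
  [set x | (trank t x <= k) && (trank t x != k.-1)].
Local Notation D t := (cyc_interval_next t).

Lemma tranks_cyc_interval t : k <= n -> tranks t (C t) = iota 0 k.
Proof.
by move=> hk; apply: tranks_eq => [|m|x]; rewrite ?iota_ltn_sorted ?mem_iota ?inE //; lia.
Qed.

Lemma tranks_cyc_interval_next t : 1 < k -> k < n ->
  tranks t (D t) = rcons (iota 0 k.-1) k.
Proof.
move=> k1 hk; apply: tranks_eq => [|m|x]; rewrite ?mem_rcons ?inE ?mem_iota; try lia.
rewrite -cats1 sorted_pairwise ?pairwise_cat; last exact: ltn_trans.
rewrite -sorted_pairwise ?iota_ltn_sorted ?andbT; last exact: ltn_trans.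
by apply/allrelP => a b; rewrite mem_iota !inE => /andP[_ ha] /eqP ->; lia.
Qed.

Lemma card_cyc_interval t : k <= n -> #|C t| = k.
Proof. exact: card_trank_lt. Qed.

Lemma card_cyc_interval_next t : 1 < k -> k < n -> #|D t| = k.
Proof.
move=> k1 hk; rewrite -(size_tranks t) tranks_cyc_interval_next //.
by rewrite size_rcons size_iota; lia.
Qed.

Lemma cyc_interval_tranks t J : #|J| = k -> 0 < k -> k <= n ->
  nth 0 (tranks t J) k.-1 < k -> J = C t.
Proof.
move=> hJ hk0 hk hl; apply/eqP; rewrite eqEcard card_cyc_interval // hJ leqnn andbT.
apply/subsetP => x hx; rewrite inE.
have xJ : trank t x \in tranks t J.
  by rewrite mem_tranks; apply/existsP; exists x; rewrite hx eqxx.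
have := index_mem (trank t x) (tranks t J); rewrite xJ size_tranks hJ.
have le_tranks : sorted leq (tranks t J) := sort_sorted leq_total _.
have := sorted_leq_nth leq_trans leqnn 0 le_tranks (index (trank t x) (tranks t J)) k.-1.
rewrite !inE size_tranks hJ nth_index //; lia.
Qed.

Lemma gale_min_cyc_interval t J : #|J| = k -> k <= n -> gale_le t (C t) J.
Proof.
move=> hJ hk; rewrite gale_leE ?card_cyc_interval ?hJ //; apply/forallP => i.
have hi := ltn_ord i.
by rewrite tranks_cyc_interval // nth_iota // add0n nth_tranks_ge // hJ.
Qed.

Lemma gale_le_cyc_interval t J : #|J| = k -> 0 < k -> k <= n ->
  gale_le t J (C t) -> J = C t.
Proof.
move=> hJ hk0 hk; rewrite gale_leE ?card_cyc_interval ?hJ // => /forallP le_JC.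
apply: cyc_interval_tranks => //.
have hi : k.-1 < k by lia.
by have := le_JC (Ordinal hi); rewrite tranks_cyc_interval //= nth_iota; lia.
Qed.

Lemma gale_min_cyc_interval_next t J : #|J| = k -> 1 < k -> k < n ->
  J != C t -> gale_le t (D t) J.
Proof.
move=> hJ k1 hk JC; rewrite gale_leE ?card_cyc_interval_next ?hJ //.
apply/forallP => i; have hi := ltn_ord i.
rewrite tranks_cyc_interval_next // nth_rcons size_iota.
case: ltnP => [hi1|hi1]; first by rewrite nth_iota // add0n nth_tranks_ge // hJ.
rewrite (_ : (i : nat) = k.-1) ?eqxx; last by lia.
by rewrite leqNgt; apply: contra JC => /(cyc_interval_tranks hJ) -> //; lia.
Qed.

Lemma cyc_interval_next_not_gale_le t : 1 < k -> k < n -> ~~ gale_le t (D t) (C t).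
Proof.
move=> k1 hk; rewrite gale_leE ?card_cyc_interval_next ?card_cyc_interval; try lia.
have hi : k.-1 < k by lia.
apply/forallP => /(_ (Ordinal hi)) /=.
rewrite tranks_cyc_interval_next // tranks_cyc_interval; try lia.
by rewrite nth_rcons size_iota ltnn eqxx nth_iota; lia.
Qed.

End GaleOrder.

Section SparsePaving.
Variable n : nat.
Implicit Types X S U J : {set 'I_n}.
Implicit Types B : {set {set 'I_n}}.

Lemma exists_circuit_sub B X : ~~ independent B X ->
  exists2 C : {set 'I_n}, C \subset X & circuit B C.
Proof.
have [m] := ubnP #|X|; elim: m X => // m IH X ltXm depX.
have [minX | /forall_inPn[x xX depXx]] := boolP [forall x in X, independent B (X :\ x)].
  by exists X; rewrite // /circuit depX.
have [|C CX circC] := IH (X :\ x) _ depXx.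
  by have := proper_card (properD1 xX); lia.
by exists C => //; apply: subset_trans CX (subsetDl _ _).
Qed.

Lemma paving_independent k B X : paving k B -> #|X| < k -> independent B X.
Proof.
move=> hpav ltXk; apply: contraT => /exists_circuit_sub[C CX /hpav].
by have := subset_leq_card CX; lia.
Qed.

Lemma paving_dual_basis_sub k B U : paving (n - k) (dual_bases B) -> k < #|U| ->
  exists2 J, J \in B & J \subset U.
Proof.
move=> hpav ltkU; have := cardsC U; rewrite card_ord => cardUC.
have /existsP[_ /andP[/imsetP[J JB ->]]] : independent (dual_bases B) (~: U).
  by apply: paving_independent hpav _; lia.
by rewrite setCS; exists J.
Qed.

(* S lies in a basis c+S, the dual paving property puts a basis J inside
   a+b+S, and exchanging c out of c+S towards J can only bring in a or b. *)
Lemma sparse_paving_nonbases_far k B S a b :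
  is_matroid B -> has_rank k B -> sparse_paving k B -> #|S|.+1 = k ->
  a \notin S -> b \notin S -> a != b -> a |: S \notin B -> b |: S \in B.
Proof.
move=> hmat hrank [hpav hpav'] cardS aS bS ab aSB; apply: contraT => bSB.
have /existsP[J0 /andP[J0B SJ0]] : independent B S.
  by apply: paving_independent hpav _; lia.
have [c cJ0 cS] : exists2 c, c \in J0 & c \notin S.
  by apply/subsetPn/negP => /subset_leq_card; rewrite (hrank _ J0B); lia.
have J0E : J0 = c |: S.
  apply/eqP; rewrite eq_sym eqEcard subUset sub1set cJ0 SJ0 cardsU1 cS (hrank _ J0B).
  by rewrite /= add1n cardS.
have ca : c != a by apply: contraNneq aSB => <-; rewrite -J0E.
have cb : c != b by apply: contraNneq bSB => <-; rewrite -J0E.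
have [J JB JU] : exists2 J, J \in B & J \subset a |: (b |: S).
  by apply: paving_dual_basis_sub hpav' _; rewrite !cardsU1 bS !inE negb_or ab aS; lia.
have cJ : c \notin J.
  by apply: contraNN cS => /(subsetP JU); rewrite !inE (negbTE ca) (negbTE cb).
have cJ0J : c \in J0 :\: J by rewrite inE cJ cJ0.
have [y /setDP[yJ yJ0]] := hmat.2 J0 J J0B JB c cJ0J.
rewrite J0E setU1K // setUC.
have /(subsetP JU) := yJ; rewrite !inE.
have yS : y \notin S by apply: contraNN yJ0 => yS; rewrite J0E inE yS orbT.
rewrite (negbTE yS) orbF.
by case/orP => /eqP ->; [rewrite (negbTE aSB) | rewrite (negbTE bSB)].
Qed.

End SparsePaving.

Lemma exists_subset_card_between (T : finType) (X Y : {set T}) m :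
  X \subset Y -> #|X| <= m <= #|Y| ->
  exists Z : {set T}, [/\ X \subset Z, Z \subset Y & #|Z| = m].
Proof.
move=> XY /andP[Xm mY].
have /card_geqP[s [s_uniq s_size sYX]] : m - #|X| <= #|Y :\: X|.
  by rewrite cardsD (setIidPr XY); lia.
exists (X :|: [set x in s]); split; first exact: subsetUl.
  by rewrite subUset XY; apply/subsetP => x; rewrite inE => /sYX /setDP[].
have disj : X :&: [set x in s] = set0.
  by apply/setP => x; rewrite !inE; apply/negbTE/andP => -[xX /sYX /setDP[_]]; rewrite xX.
by rewrite cardsU disj cardsE (card_uniqP s_uniq) s_size cards0; lia.
Qed.

Section AvoidingFarFamily.
Variables (n k : nat) (N : {set {set 'I_n}}).
Hypothesis N_far : {in N &, forall N1 N2, N1 != N2 -> #|N1 :&: N2| < k.-1}.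
Implicit Types X Y J : {set 'I_n}.

Definition ksets_avoiding : {set {set 'I_n}} :=
  [set J : {set 'I_n} | (#|J| == k) && (J \notin N)].
Local Notation F := ksets_avoiding.

Lemma ksets_avoiding_rank : has_rank k F.
Proof. by move=> J; rewrite inE => /andP[/eqP]. Qed.

Lemma ksets_avoiding_extend X y1 y2 : #|X|.+1 = k -> y1 != y2 ->
  y1 \notin X -> y2 \notin X -> (y1 |: X \in F) || (y2 |: X \in F).
Proof.
move=> cardX y12 y1X y2X; apply: contraT.
rewrite negb_or !inE !cardsU1 y1X y2X /= !add1n cardX.
rewrite eqxx /= !negbK => /andP[y1XN y2XN].
have y1y2X : y1 |: X != y2 |: X.
  by apply: contraNneq y12 => /setP/(_ y1); rewrite !inE (negbTE y1X) !orbF eqxx => <-.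
have := N_far y1XN y2XN y1y2X.
have := subset_leq_card (_ : X \subset (y1 |: X) :&: (y2 |: X)).
by rewrite subsetI !subsetUr; lia.
Qed.

Lemma ksets_avoiding_between X Y : X \subset Y -> #|X| < k < #|Y| ->
  exists2 J, J \in F & X \subset J /\ J \subset Y.
Proof.
move=> XY /andP[Xk kY].
have Xk1Y : #|X| <= k.-1 <= #|Y| by apply/andP; lia.
have [X' [XX' X'Y cardX']] := exists_subset_card_between XY Xk1Y.
have /card_gt1P[y1 [y2 [/setDP[y1Y y1X'] /setDP[y2Y y2X'] y12]]] : 1 < #|Y :\: X'|.
  by rewrite cardsD (setIidPr X'Y); lia.
have sub_y (y : 'I_n) : y \in Y -> X \subset y |: X' /\ y |: X' \subset Y.
  by move=> yY; rewrite subUset sub1set yY X'Y (subset_trans XX' (subsetUr _ _)).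
have cardX'1 : #|X'|.+1 = k by lia.
have := ksets_avoiding_extend cardX'1 y12 y1X' y2X'.
by case/orP => yXF; [exists (y1 |: X') | exists (y2 |: X')] => //; exact: sub_y.
Qed.

Lemma ksets_avoiding_augment B X : B \in F -> #|X|.+1 = k ->
  exists2 y, y \in B :\: X & y |: X \in F.
Proof.
move=> BF cardX; have cardB := ksets_avoiding_rank BF.
have notX y : y \in B :\: X -> y \notin X by case/setDP.
case: (ltnP 1 #|B :\: X|) => [/card_gt1P[y1 [y2 [y1Z y2Z y12]]] | Z_le1].
  have := ksets_avoiding_extend cardX y12 (notX _ y1Z) (notX _ y2Z).
  by case/orP; [exists y1 | exists y2].
have /cards1P[y Zy] : #|B :\: X| == 1.
  rewrite eqn_leq Z_le1 cardsD cardB.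
  by have := subset_leq_card (subsetIr B X); lia.
have yZ : y \in B :\: X by rewrite Zy set11.
exists y => //; suff -> : y |: X = B by [].
apply/eqP; rewrite eq_sym eqEcard cardsU1 (notX y yZ) cardB -cardX leqnn andbT.
apply/subsetP => z zB; rewrite in_setU1 orbC; case: (boolP (z \in X)) => //= zX.
have : z \in B :\: X by rewrite inE zX zB.
by rewrite Zy inE.
Qed.

Lemma ksets_avoiding_matroid : 0 < k < n -> is_matroid F.
Proof.
move=> /andP[k0 kn]; split.
  have k_between : #|set0 : {set 'I_n}| < k < #|[set: 'I_n]|.
    by rewrite cards0 cardsT card_ord k0.
  have [J JF _] := ksets_avoiding_between (sub0set _) k_between.
  by apply/set0Pn; exists J.
move=> B1 B2 B1F B2F x /setDP[xB1 xB2].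
have cardX : #|B1 :\ x|.+1 = k by rewrite -(ksets_avoiding_rank B1F) (cardsD1 x B1) xB1.
have [y /setDP[yB2 yX] yXF] := ksets_avoiding_augment B2F cardX.
exists y; last by rewrite setUC.
rewrite inE yB2 andbT; apply: contra yX => yB1.
by rewrite !inE yB1 andbT; apply: contraNneq xB2 => <-.
Qed.

Lemma ksets_avoiding_sparse_paving : 0 < k < n -> sparse_paving k F.
Proof.
move=> /andP[k0 kn]; split=> C /andP[depC _]; rewrite leqNgt; apply: contra depC => ltC.
  have C_between : #|C| < k < #|[set: 'I_n]| by rewrite cardsT card_ord ltC.
  have [J JF [CJ _]] := ksets_avoiding_between (subsetT C) C_between.
  by apply/existsP; exists J; rewrite JF.
have := cardsC C; rewrite card_ord => cardCC.
have CC_between : #|set0 : {set 'I_n}| < k < #|~: C| by rewrite cards0; lia.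
have [J JF [_ JC]] := ksets_avoiding_between (sub0set _) CC_between.
by apply/existsP; exists (~: J); rewrite imset_f //= subsetC.
Qed.

End AvoidingFarFamily.

Section CyclicIntervals.
Variables n k : nat.
Implicit Types t s x e : 'I_n.
Local Notation C t := (cyc_interval k t).
Local Notation D t := (cyc_interval_next k t).

Lemma cyc_interval_id t : 0 < k -> t \in C t.
Proof. by rewrite inE trank_id. Qed.

Lemma cyc_interval_next_id t : 1 < k -> t \in D t.
Proof. by rewrite inE trank_id; lia. Qed.

Lemma cyc_interval_nsucc t e : 0 < k -> trank t e = k ->
  C (nsucc t) = e |: (C t :\ t).
Proof.
move=> k0 te; apply/setP => x.
rewrite !inE trank_nsucc_base -(trank_eq t) te -(trank_eq0 t).
by have := trank_lt t x; have := trank_lt t e; repeat case: ifP; lia.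
Qed.

Lemma cyc_interval_next_nsucc t e : 1 < k < n -> trank t e = k.-1 ->
  C (nsucc t) = e |: (D t :\ t).
Proof.
move=> /andP[k1 kn] te; apply/setP => x.
rewrite !inE trank_nsucc_base -(trank_eq t) te -(trank_eq0 t).
by have := trank_lt t x; have := trank_lt t e; repeat case: ifP; lia.
Qed.

Lemma cyc_interval_nsucc_next t e : 1 < k -> trank t e = k.+1 ->
  D (nsucc t) = e |: (C t :\ t).
Proof.
move=> k1 te; apply/setP => x.
rewrite !inE trank_nsucc_base -(trank_eq t) te -(trank_eq0 t).
by have := trank_lt t x; have := trank_lt t e; repeat case: ifP; lia.
Qed.

Lemma cyc_interval_inj : 0 < k < n -> injective (fun t => C t).
Proof.
move=> /andP[k0 kn] s t Cst; apply/eqP; rewrite eq_sym -(trank_eq0 s).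
have : npred t \notin C s by rewrite Cst inE trank_npred_id -leqNgt; lia.
have : t \in C s by rewrite Cst cyc_interval_id.
rewrite !inE; have := trank_nsucc s (npred t); rewrite npredK => ->.
by have := trank_lt s (npred t); case: ifP; lia.
Qed.

Lemma cyc_interval_far s t : 1 < k -> k.+1 < n -> s != t -> s != nsucc t -> t != nsucc s ->
  1 < #|C s :\: C t|.
Proof.
move=> k1 kn st s_t1 t_s1; have n1 : 1 < n by lia.
have s0 : trank t s != 0 by rewrite trank_eq0.
have s1 : trank t s != 1 by rewrite -(trank_nsucc_id t n1) trank_eq.
have sn : trank t s != n.-1.
  apply: contra t_s1 => /eqP ts.
  by rewrite eq_sym -(trank_eq t) trank_nsucc ts eqxx trank_id.
apply/card_gt1P; have ts_lt := trank_lt t s; have rebase := trank_rebase t s.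
case: (ltnP (trank t s) k) => tsk.
  have [u tu] := trank_surj t (ltnW kn); have [v tv] := trank_surj t kn.
  exists u, v; rewrite !inE !rebase tu tv -(trank_eq t) tu tv.
  by split; repeat case: ifP; lia.
have [v tv] : {v | trank t v = (trank t s).+1} by apply: trank_surj; lia.
exists s, v; rewrite !inE !rebase tv -(trank_eq t) tv.
by split; repeat case: ifP; lia.
Qed.

End CyclicIntervals.

Section Necklaces.
Variables n k : nat.
Implicit Types t x : 'I_n.
Implicit Types I : 'I_n -> {set 'I_n}.
Local Notation C t := (cyc_interval k t).
Local Notation D t := (cyc_interval_next k t).

Lemma necklace_nsucc_sub I t : grassmann_necklace k I -> I t :\ t \subset I (nsucc t).
Proof.
by case=> _ /(_ t); case: ifP => _ => [[j ->] | ->]; [apply: subsetUl | apply: subsetDl].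
Qed.

Lemma necklace_between_intervals I t : 1 < k < n -> grassmann_necklace k I ->
  I (npred t) = C (npred t) -> I (nsucc t) = C (nsucc t) -> I t = C t \/ I t = D t.
Proof.
move=> /andP[k1 kn] hN Ip Is.
have L_sub : [set x | trank t x < k.-1] \subset I t.
  have := necklace_nsucc_sub (npred t) hN; rewrite npredK Ip; apply: subset_trans.
  apply/subsetP => x; rewrite !inE trank_npred_base -(trank_eq t) trank_npred_id.
  by have := trank_lt t x; case: ifP; lia.
have sub_W : I t \subset [set x | trank t x <= k].
  apply/subsetP => x xI; rewrite inE; case: (eqVneq x t) => [-> | xt].
    by rewrite trank_id.
  have /(subsetP (necklace_nsucc_sub t hN)) : x \in I t :\ t by rewrite !inE xt.
  rewrite -(trank_eq0 t) in xt.
  by rewrite Is inE trank_nsucc_base (negbTE xt); lia.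
have cardI := hN.1 t.
have [CI | /subsetPn[e eC eI]] := boolP (C t \subset I t).
  by left; apply/esym/eqP; rewrite eqEcard CI cardI card_cyc_interval //; lia.
have ek : trank t e = k.-1.
  have /negP eL : e \notin [set x | trank t x < k.-1] by apply: contra eI; apply: subsetP.
  by move: eC eL; rewrite !inE; lia.
right; apply/eqP; rewrite eqEcard cardI card_cyc_interval_next ?leqnn ?andbT //.
apply/subsetP => x xI; have := subsetP sub_W x xI.
rewrite !inE => -> /=; rewrite -ek trank_eq.
by apply: contraNneq eI => <-.
Qed.

End Necklaces.

Section IntervalBases.
Variables n k : nat.
Implicit Types B : {set {set 'I_n}}.
Local Notation C t := (cyc_interval k t).

Lemma cyc_interval_nsucc_basis B t : is_matroid B -> has_rank k B ->
  sparse_paving k B -> 0 < k < n -> C t \notin B -> C (nsucc t) \in B.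
Proof.
move=> hmat hrank hsp /andP[k0 kn] Ct.
have [e te] := trank_surj t kn.
have cardS : #|C t :\ t|.+1 = k.
  by have := cardsD1 t (C t); rewrite cyc_interval_id // card_cyc_interval //; lia.
have eS : e \notin C t :\ t by rewrite !inE te ltnn andbF.
have et : t != e by rewrite -(trank_eq t) te trank_id; lia.
rewrite (cyc_interval_nsucc k0 te).
apply: (sparse_paving_nonbases_far hmat hrank hsp cardS (negbT (setD11 _ _)) eS et).
by rewrite setD1K // cyc_interval_id.
Qed.

Lemma mem_spp_map B i : has_rank k B -> 0 < k <= n -> (i \in spp_map k B) = (C i \notin B).
Proof.
move=> hrank /andP[k0 kn]; rewrite inE /necklace_of.
case: pickP => [J /andP[JB /forall_inP J_min] | no_min] /=.
  case: (boolP (C i \in B)) => [CB | CB] /=.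
    by rewrite (gale_le_cyc_interval (hrank J JB) k0 kn (J_min _ CB)) eqxx.
  by apply: contraNneq CB => <-.
have -> /= : C i \notin B.
  apply/negP => CB; have /negP := no_min (C i); rewrite CB; apply.
  by apply/forall_inP => J JB; apply: gale_min_cyc_interval => //; apply: hrank.
by apply/eqP => /esym/eqP; rewrite -cards_eq0 card_cyc_interval //; lia.
Qed.

End IntervalBases.

Lemma non_adjacent_nsucc n (A : {set 'I_n}) i :
  non_adjacent A -> i \in A -> nsucc i \notin A.
Proof. by move=> /forallP/(_ i) + iA; rewrite iA => /andP[]. Qed.

Lemma non_adjacent_npred n (A : {set 'I_n}) i :
  non_adjacent A -> i \in A -> npred i \notin A.
Proof. by move=> /forallP/(_ i) + iA; rewrite iA => /andP[]. Qed.

Section SparsePavingPositroids.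
Variables n k : nat.
Hypotheses (k_gt1 : 1 < k) (k_lt : k.+1 < n).
Implicit Types A : {set 'I_n}.
Implicit Types B : {set {set 'I_n}}.
Local Notation C t := (cyc_interval k t).
Local Notation D t := (cyc_interval_next k t).

Let k_gt0 : 0 < k := ltnW k_gt1.
Let k_ltn : k < n := ltnW k_lt.
Let k_len : k <= n := ltnW k_ltn.
Let k0_ltn : 0 < k < n := introT andP (conj k_gt0 k_ltn).
Let k1_ltn : 1 < k < n := introT andP (conj k_gt1 k_ltn).
Let k0_len : 0 < k <= n := introT andP (conj k_gt0 k_len).

Definition interval_avoiding_bases A : {set {set 'I_n}} :=
  ksets_avoiding k [set C t | t in A].

Definition interval_necklace A t : {set 'I_n} := if t \in A then D t else C t.

Lemma cyc_interval_avoiding A i : (C i \in interval_avoiding_bases A) = (i \notin A).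
Proof.
rewrite inE card_cyc_interval // eqxx /=.
by congr negb; apply/imsetP/idP => [[t tA /(cyc_interval_inj k0_ltn) ->] // | iA]; exists i.
Qed.

Lemma non_adjacent_intervals_far A : non_adjacent A ->
  {in [set C t | t in A] &, forall N1 N2, N1 != N2 -> #|N1 :&: N2| < k.-1}.
Proof.
move=> hA _ _ /imsetP[s sA ->] /imsetP[t tA ->] Cst.
have st : s != t by apply: contraNneq Cst => ->.
have s_t1 : s != nsucc t by apply: contraTneq sA => ->; apply: non_adjacent_nsucc.
have t_s1 : t != nsucc s by apply: contraTneq tA => ->; apply: non_adjacent_nsucc.
have := cyc_interval_far k_gt1 k_lt st s_t1 t_s1.
by rewrite cardsD card_cyc_interval //; lia.
Qed.

Lemma interval_necklace_grassmann A : non_adjacent A ->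
  grassmann_necklace k (interval_necklace A).
Proof.
rewrite /interval_necklace => hA; split => t.
  by case: ifP => _; rewrite ?card_cyc_interval_next ?card_cyc_interval.
have -> : t \in (if t \in A then D t else C t).
  by case: ifP => _; rewrite ?cyc_interval_next_id ?cyc_interval_id.
case: (boolP (t \in A)) => tA.
  rewrite (negbTE (non_adjacent_nsucc hA tA)).
  have [e te] := trank_surj t (leq_ltn_trans (leq_pred k) k_ltn).
  by exists e; rewrite (cyc_interval_next_nsucc k1_ltn te) setUC.
case: ifP => _.
  have [e te] := trank_surj t k_lt.
  by exists e; rewrite (cyc_interval_nsucc_next k_gt1 te) setUC.
have [e te] := trank_surj t k_ltn.
by exists e; rewrite (cyc_interval_nsucc k_gt0 te) setUC.
Qed.

Lemma interval_avoiding_basesE A :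
  interval_avoiding_bases A = necklace_bases k (interval_necklace A).
Proof.
apply/setP => J; rewrite !inE /interval_necklace.
case: (eqVneq #|J| k) => //= cardJ.
apply/idP/forallP => [JA t | J_min].
  case: ifP => [tA | _]; last exact: gale_min_cyc_interval.
  by apply: gale_min_cyc_interval_next => //; apply: contraNneq JA => ->; apply: imset_f.
apply/imsetP => -[s sA Js]; have := J_min s; rewrite sA Js.
by apply/negP/cyc_interval_next_not_gale_le.
Qed.

Lemma interval_avoiding_spp A : non_adjacent A ->
  sparse_paving_positroid k (interval_avoiding_bases A).
Proof.
move=> hA; have far := non_adjacent_intervals_far hA.
split; last exact: ksets_avoiding_sparse_paving far k0_ltn.
split; first exact: ksets_avoiding_matroid far k0_ltn.
split; first exact: ksets_avoiding_rank.
exists (interval_necklace A).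
by split; [exact: interval_necklace_grassmann | exact: interval_avoiding_basesE].
Qed.

Lemma spp_map_interval_avoiding A : spp_map k (interval_avoiding_bases A) = A.
Proof.
apply/setP => i.
by rewrite mem_spp_map ?cyc_interval_avoiding ?negbK //; apply: ksets_avoiding_rank.
Qed.

Lemma spp_map_non_adjacent B : sparse_paving_positroid k B -> non_adjacent (spp_map k B).
Proof.
move=> [[hmat [hrank _]] hsp].
have next_basis := cyc_interval_nsucc_basis hmat hrank hsp k0_ltn.
apply/forallP => i; apply/implyP; rewrite !mem_spp_map // !negbK => Ci.
rewrite next_basis // andbT; apply: contraT => /next_basis.
by rewrite npredK (negbTE Ci).
Qed.

Lemma sparse_paving_positroidE B : sparse_paving_positroid k B ->
  B = interval_avoiding_bases (spp_map k B).
Proof.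
move=> hB; have hA := spp_map_non_adjacent hB.
case: hB => [[_ [hrank [I [hN BI]]]] _].
have I_C t : C t \in B -> I t = C t.
  rewrite {1}BI inE => /andP[_ /forallP I_min].
  exact: gale_le_cyc_interval (hN.1 t) k_gt0 k_len (I_min t).
apply/setP => J; rewrite inE; apply/idP/andP => [JB | [/eqP cardJ JA]].
  rewrite (hrank J JB) eqxx; split=> //; apply/imsetP => -[t].
  by rewrite mem_spp_map // => + JC; rewrite -JC JB.
rewrite BI inE cardJ eqxx /=; apply/forallP => s.
have [Cs | Cs] := boolP (C s \in B); first by rewrite I_C //; apply: gale_min_cyc_interval.
have sA : s \in spp_map k B by rewrite mem_spp_map.
have Cp : C (npred s) \in B by rewrite -[_ \in B]negbK -mem_spp_map ?non_adjacent_npred.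
have Cn : C (nsucc s) \in B by rewrite -[_ \in B]negbK -mem_spp_map ?non_adjacent_nsucc.
case: (necklace_between_intervals k1_ltn hN (I_C _ Cp) (I_C _ Cn)) => ->.
  exact: gale_min_cyc_interval.
by apply: gale_min_cyc_interval_next => //; apply: contraNneq JA => ->; apply: imset_f.
Qed.

End SparsePavingPositroids.

Theorem corollary3p3 (n k : nat) :
  2 <= k -> k <= n - 2 ->
  (* the map is well defined into non-adjacent subsets *)
  (forall B : {set {set 'I_n}}, sparse_paving_positroid k B ->
     non_adjacent (spp_map k B)) /\
  (* injective *)
  (forall B1 B2 : {set {set 'I_n}},
     sparse_paving_positroid k B1 -> sparse_paving_positroid k B2 ->
     spp_map k B1 = spp_map k B2 -> B1 = B2) /\
  (* surjective *)
  (forall A : {set 'I_n}, non_adjacent A ->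
     exists B : {set {set 'I_n}}, sparse_paving_positroid k B /\ spp_map k B = A).
Proof.
move=> k_gt1 k_le; have k_lt : k.+1 < n by lia.
split; first exact: spp_map_non_adjacent.
split=> [B1 B2 spp1 spp2 eq_map | A hA].
  rewrite (sparse_paving_positroidE k_gt1 k_lt spp1).
  by rewrite (sparse_paving_positroidE k_gt1 k_lt spp2) eq_map.
exists (interval_avoiding_bases k A).
by split; [exact: interval_avoiding_spp | exact: spp_map_interval_avoiding].
Qed.
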